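(* Let $\Sigma$ be a Riemann surface and let $I_1,I_2$ be clean subsets of $\Sigma_{\mathbb{C}}$. Then $I_1\cup I_2$ is clean if and only if at least one of the following holds: (1) $I_1$ and $I_2$ are both conjugation invariant; (2) $I_i\cap\overline{I_j}=\emptyset$ for all $1\le i,j\le 2$; (3) $I_1=\overline{I_2}$; (4) $I_1\subset I_2$ or $I_2\subset I_1$.
   Context: For a Riemann surface $(\Sigma,j)$ write $\overline{\Sigma}=(\Sigma,-j)$. The complex double $\Sigma_{\mathbb{C}}=\Sigma\cup\overline{\Sigma}$ is obtained by gluing along the boundary by the identity, with complex structure restricting to $j$ on $\Sigma$ and $-j$ on $\overline\Sigma$; it carries an anti-holomorphic involution $z\mapsto\bar z$ exchanging the two copies, and for $S\subset\Sigma_{\mathbb{C}}$, $\overline S$ denotes its image. $S$ is conjugation invariant if $S=\overline S$, and clean if either $S=\overline{S}$ or $S\cap\overline{S}=\emptyset$. *)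

From mathcomp Require Import all_boot.
From mathcomp Require Import boolp classical_sets.
Set Implicit Arguments. Unset Strict Implicit. Unset Printing Implicit Defensive.
Local Open Scope classical_set_scope.

(* Underlying point set of the complex cdouble Sigma_C = Sigma U conj(Sigma),
   glued along the boundary [bd] by the identity.  A point is a point [x] of
   Sigma together with a side: [false] = the copy Sigma, [true] = the copy
   conj(Sigma); boundary points only occur once (on side [false]). *)
Record cdouble (S : Type) (bd : set S) := DPt {
  dbase : S;
  dside : bool;
  dside_ok : dside -> ~ bd dbase }.

Definition side_false_ok (S : Type) (bd : set S) (x : S) :
  (false : bool) -> ~ bd x := fun h => match notF h with end.

Definition dconj (S : Type) (bd : set S) (p : cdouble bd) : cdouble bd :=
  match p with
  | DPt x true _ => @DPt S bd x false (@side_false_ok S bd x)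
  | DPt x false _ =>
      match pselect (bd x) with
      | left _ => p
      | right nb => @DPt S bd x true (fun _ => nb)
      end
  end.

Definition dbar (S : Type) (bd : set S) (A : set (cdouble bd)) : set (cdouble bd) :=
  (@dconj S bd) @` A.

Definition conj_invariant (S : Type) (bd : set S) (A : set (cdouble bd)) : Prop :=
  A = dbar A.

Definition clean (S : Type) (bd : set S) (A : set (cdouble bd)) : Prop :=
  A = dbar A \/ A `&` dbar A = set0.

From mathcomp Require Import all_boot.
From mathcomp Require Import boolp classical_sets.
Set Implicit Arguments.
Unset Strict Implicit.
Unset Printing Implicit Defensive.
Local Open Scope classical_set_scope.

(* Only two properties of conjugation matter: it is an involution, and taking
   images commutes with unions.  If I1 u I2 is disjoint from its conjugate we are
   in case (2).  If it is conjugation invariant, the conjugate of a clean set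
   disjoint from its own conjugate must lie in the other set; according as I1 and
   I2 are invariant or not this yields case (1), (4), or both conj I1 <= I2 and
   conj I2 <= I1, i.e. I1 = conj I2. *)

(* [clean A] unfolds to [clean_for dconj A]. *)
Definition clean_for (T : Type) (f : T -> T) (A : set T) : Prop :=
  A = f @` A \/ A `&` f @` A = set0.

Lemma subsetUl_disjoint (T : Type) (A B C : set T) :
  C `<=` A `|` B -> B `&` C = set0 -> C `<=` A.
Proof.
move=> CAB BC x Cx; case: (CAB x Cx) => // Bx.
by have : (B `&` C) x by []; rewrite BC.
Qed.

Lemma setU_image_disjointP (T : Type) (f : T -> T) (A B : set T) :
  (A `|` B) `&` f @` (A `|` B) = set0 <->
  (forall i j : bool, (if i then B else A) `&` f @` (if j then B else A) = set0).
Proof.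
rewrite image_setU setIUl !setIUr !setU_eq0.
split=> [[[AA AB] [BA BB]] [] []|H] //.
by have := H false false; have := H false true; have := H true false;
  have := H true true.
Qed.

Section InvolutiveImage.
Variables (T : Type) (f : T -> T).
Hypothesis fK : involutive f.

Lemma image_involutiveK (A : set T) : f @` (f @` A) = A.
Proof.
by rewrite image_comp (_ : f \o f = id) ?image_id //; apply/funext => x /=.
Qed.

Lemma clean_for_setU_cases (A B : set T) :
  clean_for f A -> clean_for f B -> clean_for f (A `|` B) ->
  [\/ A = f @` A /\ B = f @` B,
      (A `|` B) `&` f @` (A `|` B) = set0,
      A = f @` B
    | A `<=` B \/ B `<=` A].
Proof.
move=> cA cB [UU|UD]; last exact: Or42.
have fA_sub : f @` A `<=` B `|` A.
  by rewrite setUC UU image_setU; exact: subsetUl.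
have fB_sub : f @` B `<=` A `|` B.
  by rewrite UU image_setU; exact: subsetUr.
case: cA cB => [AA|AD] [BB|BD].
- exact: Or41.
- apply: Or44; right; rewrite -(image_involutiveK B) AA.
  by apply: image_subset; exact: subsetUl_disjoint fB_sub BD.
- apply: Or44; left; rewrite -(image_involutiveK A) BB.
  by apply: image_subset; exact: subsetUl_disjoint fA_sub AD.
- apply: Or43; rewrite eqEsubset; split; last exact: subsetUl_disjoint fB_sub BD.
  rewrite -{1}(image_involutiveK A); apply: image_subset.
  exact: subsetUl_disjoint fA_sub AD.
Qed.

Lemma clean_for_setU (A B : set T) :
  clean_for f A -> clean_for f B ->
  [\/ A = f @` A /\ B = f @` B,
      (A `|` B) `&` f @` (A `|` B) = set0,
      A = f @` B
    | A `<=` B \/ B `<=` A] ->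
  clean_for f (A `|` B).
Proof.
move=> cA cB [[AA BB]|UD|AB|[AB|BA]].
- by left; rewrite image_setU -AA -BB.
- by right.
- by left; rewrite image_setU AB image_involutiveK setUC.
- by rewrite setUidr.
- by rewrite setUidl.
Qed.

End InvolutiveImage.

Lemma dconjK (S : Type) (bd : set S) : involutive (@dconj S bd).
Proof.
case=> x [] h /=.
  case: pselect => [b|nb]; first by case: (h isT).
  by congr DPt; apply: Prop_irrelevance.
case: pselect => [b|nb] /=; first by case: pselect.
by congr DPt; apply: Prop_irrelevance.
Qed.

Theorem lemma2p7 (S : Type) (bd : set S) (I1 I2 : set (cdouble bd)) :
  clean I1 -> clean I2 ->
  (clean (I1 `|` I2) <->
   [\/ conj_invariant I1 /\ conj_invariant I2,
       (forall i j : bool,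
          (if i then I2 else I1) `&` dbar (if j then I2 else I1) = set0),
       I1 = dbar I2
     | I1 `<=` I2 \/ I2 `<=` I1]).
Proof.
move=> c1 c2; rewrite -(propext (setU_image_disjointP (@dconj S bd) I1 I2)).
split; [exact: (clean_for_setU_cases (@dconjK S bd) c1 c2)
       | exact: (clean_for_setU (@dconjK S bd) c1 c2)].
Qed.
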